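(* Let $H'=\begin{bmatrix}0\\1\\0\end{bmatrix}$ and $V'=\begin{bmatrix}0&1&0\end{bmatrix}$, and let $\mathcal{C}'=Av_{\mathfrak{P}}(H',V')$. A polyomino $P$ belongs to $\mathcal{C}'$ if and only if every maximal connected set of cells in a row (resp. in a column) of $P$ has a contact with the minimal bounding rectangle of $P$, i.e. contains a cell in the first or last column (resp. in the first or last row) of that rectangle.
   Context: A polyomino is a finite union of unit cells of $\mathbb{Z}\times\mathbb{Z}$ that is connected via edge adjacency, up to translation, identified with the binary matrix of its minimal bounding rectangle (entry $1$ iff the corresponding unit square is a cell). A matrix is a submatrix of another if obtained by deleting rows and/or columns; $Av_{\mathfrak{P}}(\mathcal{M})$ is the set of polyominoes with no submatrix in $\mathcal{M}$. *)

From mathcomp Require Import all_boot all_order all_algebra.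
Set Implicit Arguments. Unset Strict Implicit. Unset Printing Implicit Defensive.

Definition cell m n (P : 'M[bool]_(m, n)) (c : 'I_m * 'I_n) : bool := P c.1 c.2.

Definition adj_cells m n (P : 'M[bool]_(m, n)) : rel ('I_m * 'I_n) :=
  fun c d => [&& cell P c, cell P d &
     ((c.1 == d.1 :> nat) && ((c.2.+1 == d.2 :> nat) || (d.2.+1 == c.2 :> nat)))
  || ((c.2 == d.2 :> nat) && ((c.1.+1 == d.1 :> nat) || (d.1.+1 == c.1 :> nat)))].

(* P is (the matrix of the minimal bounding rectangle of) a polyomino:
   nonempty, every row and every column of the rectangle contains a cell
   (minimality of the bounding rectangle), and the set of cells is
   connected via edge adjacency. *)
Definition is_polyomino m n (P : 'M[bool]_(m, n)) : Prop :=
  [/\ 0 < m, 0 < n,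
      (forall i : 'I_m, exists j : 'I_n, P i j),
      (forall j : 'I_n, exists i : 'I_m, P i j) &
      (forall c d, cell P c -> cell P d -> connect (adj_cells P) c d)].

Definition submatrix p q m n (A : 'M[bool]_(p, q)) (M : 'M[bool]_(m, n)) : Prop :=
  exists (f : 'I_p -> 'I_m) (g : 'I_q -> 'I_n),
    (forall i i' : 'I_p, i < i' -> f i < f i') /\
    (forall j j' : 'I_q, j < j' -> g j < g j') /\
    (forall i j, A i j = M (f i) (g j)).

Definition avoids p q m n (M : 'M[bool]_(m, n)) (A : 'M[bool]_(p, q)) : Prop :=
  ~ submatrix A M.

Definition Hpat : 'M[bool]_(3, 1) := \matrix_(i < 3, j < 1) (i == 1 :> nat).
Definition Vpat : 'M[bool]_(1, 3) := \matrix_(i < 1, j < 3) (j == 1 :> nat).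

(* entry at natural-number position, false outside the rectangle *)
Definition at_ m n (P : 'M[bool]_(m, n)) (i j : nat) : bool :=
  match @insub _ (fun k => k < m) 'I_m i, @insub _ (fun k => k < n) 'I_n j with
  | Some i', Some j' => P i' j'
  | _, _ => false
  end.

Definition row_segment m n (P : 'M[bool]_(m, n)) (i a b : nat) : Prop :=
  [/\ a <= b, (forall k, a <= k <= b -> at_ P i k),
      (a = 0 \/ ~~ at_ P i a.-1) & ~~ at_ P i b.+1].

Definition col_segment m n (P : 'M[bool]_(m, n)) (j a b : nat) : Prop :=
  [/\ a <= b, (forall k, a <= k <= b -> at_ P k j),
      (a = 0 \/ ~~ at_ P a.-1 j) & ~~ at_ P b.+1 j].

Definition contact_property m n (P : 'M[bool]_(m, n)) : Prop :=
  (forall i a b, row_segment P i a b -> a = 0 \/ b = n.-1) /\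
  (forall j a b, col_segment P j a b -> a = 0 \/ b = m.-1).

From mathcomp Require Import all_boot all_order all_algebra.
Set Implicit Arguments. Unset Strict Implicit. Unset Printing Implicit Defensive.

(* A
   maximal run of cells touching neither end of its line is flanked by two
   empty positions inside the rectangle, which gives such a pattern;
   conversely, the maximal run through the 1 of such a pattern lies strictly
   between its two 0s, so it touches neither end. *)

Definition segment (p : nat -> bool) (a b : nat) : Prop :=
  [/\ a <= b, (forall k, a <= k <= b -> p k), (a = 0 \/ ~~ p a.-1) & ~~ p b.+1].

Definition gap010 (p : nat -> bool) (N : nat) : Prop :=
  exists x y z, [/\ x < y < z, z < N, ~~ p x, p y & ~~ p z].

Section Runs.

Variable p : nat -> bool.

Lemma run_start x y : x < y -> ~~ p x -> p y ->
  exists a, [/\ x < a <= y, (forall k, a <= k <= y -> p k) & ~~ p a.-1].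
Proof.
move=> lt_xy px py.
pose q a := (x < a <= y) && [forall k : 'I_y.+1, (a <= k) ==> p k].
have q_y : q y.
  rewrite /q lt_xy leqnn; apply/forallP => k; apply/implyP => le_yk.
  by rewrite (_ : nat_of_ord k = y) //; apply/eqP; rewrite eqn_leq le_yk -ltnS ltn_ord.
have [a /andP[/andP[lt_xa le_ay] /forallP run] min_a] := ex_minnP (ex_intro q y q_y).
have run_a k : a <= k <= y -> p k.
  by case/andP=> le_ak le_ky; have := run (Ordinal (le_ky : k < y.+1)); rewrite /= le_ak.
exists a; split=> //; first by rewrite lt_xa.
apply/negP=> pa1; have a_pos : 0 < a by apply: leq_ltn_trans lt_xa.
have [eq_xa1 | lt_xa1] := eqVneq x a.-1; first by rewrite eq_xa1 pa1 in px.
have : q a.-1.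
  rewrite /q ltn_neqAle lt_xa1 -ltnS prednK // lt_xa (leq_trans (leq_pred a)) //=.
  apply/forallP=> k; apply/implyP=> le_a1k; rewrite leq_eqVlt in le_a1k.
  case/orP: le_a1k => [/eqP <- // | lt_a1k].
  by apply: run_a; rewrite -(prednK a_pos) lt_a1k -ltnS ltn_ord.
by move/min_a; rewrite -ltnS prednK // ltnn.
Qed.

Lemma run_end y z : y < z -> p y -> ~~ p z ->
  exists b, [/\ y <= b < z, (forall k, y <= k <= b -> p k) & ~~ p b.+1].
Proof.
move=> lt_yz py pz.
pose q b := (y <= b < z) && [forall k : 'I_b.+1, (y <= k) ==> p k].
have q_y : q y.
  rewrite /q leqnn lt_yz; apply/forallP => k; apply/implyP => le_yk.
  by rewrite (_ : nat_of_ord k = y) //; apply/eqP; rewrite eqn_leq le_yk -ltnS ltn_ord.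
have ub_q b : q b -> b <= z by case/andP=> /andP[_ /ltnW].
have [b /andP[/andP[le_yb lt_bz] /forallP run] max_b] := ex_maxnP (ex_intro q y q_y) ub_q.
have run_b k : y <= k <= b -> p k.
  by case/andP=> le_yk le_kb; have := run (Ordinal (le_kb : k < b.+1)); rewrite /= le_yk.
exists b; split=> //; first by rewrite le_yb.
apply/negP=> pb1; have [eq_bz | lt_b1z] := eqVneq b.+1 z; first by rewrite -eq_bz pb1 in pz.
have : q b.+1.
  rewrite /q ltn_neqAle lt_b1z lt_bz (leq_trans le_yb) //=.
  apply/forallP=> k; apply/implyP=> le_yk; have := ltn_ord k; rewrite ltnS leq_eqVlt.
  by case/orP=> [/eqP -> // | lt_kb1]; apply: run_b; rewrite le_yk -ltnS.
by move/max_b; rewrite ltnn.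
Qed.

Lemma segment_contact_gap010 N : (forall k, p k -> k < N) ->
  (forall a b, segment p a b -> a = 0 \/ b = N.-1) <-> ~ gap010 p N.
Proof.
move=> p_bounded; split.
- move=> contact [x [y [z [/andP[lt_xy lt_yz] lt_zN px py pz]]]].
  have [a [/andP[lt_xa le_ay] run_a pa]] := run_start lt_xy px py.
  have [b [/andP[le_yb lt_bz] run_b pb]] := run_end lt_yz py pz.
  have seg : segment p a b.
    split=> //; [exact: leq_trans le_ay le_yb | | by right].
    move=> k /andP[le_ak le_kb]; have [le_ky | lt_yk] := leqP k y.
      by apply: run_a; rewrite le_ak le_ky.
    by apply: run_b; rewrite le_kb ltnW.
  case: (contact a b seg) => [a0 | bN]; first by rewrite a0 in lt_xa.
  have N_pos : 0 < N := leq_ltn_trans (leq0n z) lt_zN.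
  by move: lt_bz; rewrite bN -ltnS prednK // ltnS leqNgt lt_zN.
- move=> no_gap a b [le_ab run [-> | pa] pb]; [by left | ].
  have [-> | neq_bN] := eqVneq b N.-1; [by right | exfalso].
  have pa' : p a by apply: run; rewrite leqnn le_ab.
  have pb' : p b by apply: run; rewrite leqnn le_ab.
  have a_pos : 0 < a by case: a pa pa' {le_ab run} => // /negPf ->.
  apply: no_gap; exists a.-1, a, b.+1; split=> //.
  + by rewrite ltnS le_ab andbT prednK.
  + have lt_bN := p_bounded b pb'.
    by rewrite ltn_neqAle lt_bN andbT; apply: contra neq_bN => /eqP <-.
Qed.

End Runs.

Section Entries.

Variables (m n : nat) (P : 'M[bool]_(m, n)).

Lemma at_ord (i : 'I_m) (j : 'I_n) : at_ P i j = P i j.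
Proof. by rewrite /at_ !valK. Qed.

Lemma at_Ordinal i j (lt_im : i < m) (lt_jn : j < n) :
  at_ P i j = P (Ordinal lt_im) (Ordinal lt_jn).
Proof. exact: at_ord (Ordinal lt_im) (Ordinal lt_jn). Qed.

Lemma at_bounded i j : at_ P i j -> i < m /\ j < n.
Proof. by rewrite /at_; do 2![case: insubP => // ? ? _]. Qed.

End Entries.

Definition ord_triple N (x y z : 'I_N) (k : 'I_3) : 'I_N := nth x [:: x; y; z] k.

Lemma ord_triple_increasing N (x y z : 'I_N) : x < y -> y < z ->
  forall k l : 'I_3, k < l -> ord_triple x y z k < ord_triple x y z l.
Proof.
by move=> lt_xy lt_yz [[|[|[|?]]] ?] [[|[|[|?]]] ?] //= _; apply: ltn_trans lt_yz.
Qed.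

Lemma submatrix_Vpat m n (P : 'M[bool]_(m, n)) :
  submatrix Vpat P <-> exists i, gap010 (at_ P i) n.
Proof.
split.
- move=> [f [g [_ [incr_g eq_pat]]]]; exists (f ord0).
  exists (g (inord 0)), (g (inord 1)), (g (inord 2)).
  rewrite !at_ord -!eq_pat !mxE !inordK //.
  by split=> //; rewrite ?incr_g ?inordK.
- move=> [i [x [y [z [/andP[lt_xy lt_yz] lt_zn px py pz]]]]].
  have [lt_im lt_yn] := at_bounded py.
  have lt_xn := ltn_trans lt_xy lt_yn.
  pose g := ord_triple (Ordinal lt_xn) (Ordinal lt_yn) (Ordinal lt_zn).
  exists (fun=> Ordinal lt_im), g; split; first by case=> [[]] // ? [[]].
  split; first exact: ord_triple_increasing.
  move=> i' [[|[|[|?]]] ?] //; rewrite mxE -at_Ordinal //=.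
  all: by apply/esym/negbTE.
Qed.

Lemma submatrix_Hpat m n (P : 'M[bool]_(m, n)) :
  submatrix Hpat P <-> exists j, gap010 (at_ P ^~ j) m.
Proof.
split.
- move=> [f [g [incr_f [_ eq_pat]]]]; exists (g ord0).
  exists (f (inord 0)), (f (inord 1)), (f (inord 2)).
  rewrite !at_ord -!eq_pat !mxE !inordK //.
  by split=> //; rewrite ?incr_f ?inordK.
- move=> [j [x [y [z [/andP[lt_xy lt_yz] lt_zm px py pz]]]]].
  have [lt_ym lt_jn] := at_bounded py.
  have lt_xm := ltn_trans lt_xy lt_ym.
  pose f := ord_triple (Ordinal lt_xm) (Ordinal lt_ym) (Ordinal lt_zm).
  exists f, (fun=> Ordinal lt_jn); split; first exact: ord_triple_increasing.
  split; first by case=> [[]] // ? [[]].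
  move=> [[|[|[|?]]] ?] j' //; rewrite mxE -at_Ordinal //=.
  all: by apply/esym/negbTE.
Qed.

Theorem proposition18 (m n : nat) (P : 'M[bool]_(m, n)) :
  is_polyomino P ->
  ((avoids P Hpat /\ avoids P Vpat) <-> contact_property P).
Proof.
move=> _.
have rows i := segment_contact_gap010 (p := at_ P i) (N := n)
  (fun k pk => (at_bounded pk).2).
have cols j := segment_contact_gap010 (p := at_ P ^~ j) (N := m)
  (fun k pk => (at_bounded pk).1).
split=> [[no_Hpat no_Vpat] | [row_contact col_contact]].
- split=> [i | j].
  + by apply/rows => gap; apply: no_Vpat; apply/submatrix_Vpat; exists i.
  + by apply/cols => gap; apply: no_Hpat; apply/submatrix_Hpat; exists j.
- split.
  + by move/submatrix_Hpat=> [j]; apply/cols/col_contact.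
  + by move/submatrix_Vpat=> [i]; apply/rows/row_contact.
Qed.
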